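(* For positive integers $i$ and $k$, let $$c_k(i)=\frac{i+3k}{i+k}\binom{i+k}{2k}-\binom{i}{k}.$$ Then $c_k(i)\geq0$ for all $i\ge1$ and $k\geq1$.
   Context: Ordinary binomial coefficients, with $\binom{n}{m}=0$ when $m<0$ or $m>n$. *)

From mathcomp Require Import all_boot all_order all_algebra.
Set Implicit Arguments. Unset Strict Implicit. Unset Printing Implicit Defensive.
Import Order.TTheory GRing.Theory Num.Theory.
Local Open Scope ring_scope.

Definition c (k i : nat) : rat :=
  ((i + 3 * k)%N%:R / (i + k)%N%:R) * 'C(i + k, 2 * k)%:R - 'C(i, k)%:R.

From mathcomp Require Import all_boot all_order all_algebra.
Import Order.TTheory GRing.Theory Num.Theory.
Local Open Scope ring_scope.

(* The factor (i+3k)/(i+k) is at least 1, and C(i, k) <= C(i+k, 2k): both sides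
   count choices of the same number i - k of elements, from sets of sizes i and
   i + k respectively. *)

Lemma leq_bin_addn2 (n m p : nat) : ('C(n, m) <= 'C(n + p, m + p))%N.
Proof.
have [le_mn | lt_nm] := leqP m n; last by rewrite bin_small.
have le_mpnp : (m + p <= n + p)%N by rewrite leq_add2r.
rewrite -(bin_sub le_mn) -(bin_sub le_mpnp) subnDr.
exact/leq_bin2l/leq_addr.
Qed.

Lemma ler_ratio_addr (F : numFieldType) (a b : F) :
  0 < a -> 0 <= b -> 1 <= (a + b) / a.
Proof. by move=> a_gt0 b_ge0; rewrite ler_pdivlMr // mul1r lerDl. Qed.

Theorem lemma3 (i k : nat) (hi : (1 <= i)%N) (hk : (1 <= k)%N) : 0 <= c k i.
Proof.
have ik_gt0 : (0 : rat) < (i + k)%N%:R by rewrite ltr0n addn_gt0 hi.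
have ratio_ge1 : 1 <= ((i + 3 * k)%N%:R / (i + k)%N%:R : rat).
  by rewrite -[(3 * k)%N]/((2.+1) * k)%N mulSn addnA natrD ler_ratio_addr.
have bin_le : ('C(i, k)%:R : rat) <= 'C(i + k, 2 * k)%:R.
  by rewrite ler_nat mul2n -addnn leq_bin_addn2.
rewrite /c subr_ge0 (le_trans bin_le) // -[X in X <= _]mul1r.
by rewrite ler_wpM2r.
Qed.
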